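(* Let $\chi$ and $\zeta$ be two splitting maps on $\mathcal H$ with $\zeta\sqsubseteq\chi$. Then (1) $\mathrm{loc}(\zeta)\subseteq\mathrm{loc}(\chi)$ and (2) $\mathrm{stloc}(\zeta)\subseteq\mathrm{stloc}(\chi)$.
   Context: All Hilbert spaces are finite-dimensional and complex. A splitting map on $\mathcal H$ is an isometry $\chi:\mathcal H\to\mathcal H_L^\chi\otimes\mathcal H_R^\chi$. $A\in\mathcal L(\mathcal H)$ is $\chi$-local if $A=\chi^\dagger(\tilde A\otimes\mathbb 1)\chi$ for some $\tilde A\in\mathcal L(\mathcal H_L^\chi)$; $\mathrm{loc}(\chi)$ is the set of these. $A$ is strictly $\chi$-local if there exists $\tilde A\in\mathcal L(\mathcal H_L^\chi)$ with $A\chi^\dagger=\chi^\dagger(\tilde A\otimes\mathbb 1)$ and $\chi A=(\tilde A\otimes\mathbb 1)\chi$; $\mathrm{stloc}(\chi)$ is the set of these. Comprehension: $\zeta\sqsubseteq\chi$ if there exist a Hilbert space $\mathcal H_M$ and isometries $\bullet:\mathcal H_R^\zeta\to\mathcal H_M\otimes\mathcal H_R^\chi$ and $\circ:\mathcal H_L^\chi\to\mathcal H_L^\zeta\otimes\mathcal H_M$ with $(\mathbb 1_{\mathcal H_L^\zeta}\otimes\bullet)\zeta=(\circ\otimes\mathbb 1_{\mathcal H_R^\chi})\chi$. *)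

(* Finite-dimensional complex Hilbert spaces are modelled as
   column spaces C^n over a numClosedFieldType C (e.g. the complex numbers);
   linear maps C^n -> C^m are matrices 'M[C]_(m, n) acting on columns. *)
From mathcomp Require Import all_boot all_order all_algebra.
From mathcomp Require Export mxtens.
Set Implicit Arguments. Unset Strict Implicit. Unset Printing Implicit Defensive.
Import GRing.Theory Num.Theory.
Local Open Scope ring_scope.

Section Defs.
Variable C : numClosedFieldType.

Definition adj {m n : nat} (A : 'M[C]_(m, n)) : 'M[C]_(n, m) :=
  (map_mx Num.conj A)^T.

Definition isometry {m n : nat} (V : 'M[C]_(m, n)) : Prop :=
  adj V *m V = 1%:M.

(* A splitting map on C^n: an isometry chi : C^n -> C^a (x) C^b, where the
   tensor product C^a (x) C^b is C^(a*b) with the Kronecker convention of tensmx. *)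
Definition splitting_map {n a b : nat} (chi : 'M[C]_(a * b, n)) : Prop :=
  isometry chi.

Definition loc {n a b : nat} (chi : 'M[C]_(a * b, n)) (A : 'M[C]_n) : Prop :=
  exists At : 'M[C]_a, A = adj chi *m (At *t (1%:M : 'M[C]_b)) *m chi.

Definition stloc {n a b : nat} (chi : 'M[C]_(a * b, n)) (A : 'M[C]_n) : Prop :=
  exists At : 'M[C]_a,
    A *m adj chi = adj chi *m (At *t (1%:M : 'M[C]_b)) /\
    chi *m A = (At *t (1%:M : 'M[C]_b)) *m chi.

(* Comprehension zeta [= chi: there are H_M = C^k and isometries
   bul : H_R^zeta -> H_M (x) H_R^chi and circ : H_L^chi -> H_L^zeta (x) H_M with
   (1 (x) bul) zeta = (circ (x) 1) chi, modulo the canonical associativity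
   identification C^(az*(k*bc)) = C^((az*k)*bc). *)
Definition comprehends {n az bz ac bc : nat}
  (zeta : 'M[C]_(az * bz, n)) (chi : 'M[C]_(ac * bc, n)) : Prop :=
  exists (k : nat) (bul : 'M[C]_(k * bc, bz)) (circ : 'M[C]_(az * k, ac)),
    isometry bul /\ isometry circ /\
    castmx (mulnA az k bc, erefl n) (((1%:M : 'M[C]_az) *t bul) *m zeta)
    = (circ *t (1%:M : 'M[C]_bc)) *m chi.

End Defs.

(* With W := 1 (x) bul and V := circ (x) 1, comprehension says W zeta = V chi.
   Since bul is an isometry, At (x) 1 = W^+ (At (x) 1 (x) 1) W, and At (x) 1 (x) 1
   commutes with W; pushing this through W zeta = V chi and compressing by the
   isometry V turns a zeta-local At into the chi-local (circ^+ (At (x) 1) circ). *)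
From Pilot Require Import Defs.
From mathcomp Require Import all_boot all_order all_algebra.
From mathcomp Require Import mxtens.
Set Implicit Arguments. Unset Strict Implicit. Unset Printing Implicit Defensive.
Import GRing.Theory Num.Theory.
Local Open Scope ring_scope.

Section Adjoint.
Variable C : numClosedFieldType.

Lemma adjM m n p (A : 'M[C]_(m, n)) (B : 'M[C]_(n, p)) :
  adj (A *m B) = adj B *m adj A.
Proof. by rewrite /adj map_mxM trmx_mul. Qed.

Lemma adj_tens m n p q (A : 'M[C]_(m, n)) (B : 'M[C]_(p, q)) :
  adj (A *t B) = adj A *t adj B.
Proof. by rewrite /adj (map_mxT (Num.conj : {rmorphism C -> C})) trmx_tens. Qed.

Lemma adj1 m : adj (1%:M : 'M[C]_m) = 1%:M.
Proof. by rewrite /adj (map_mx1 (Num.conj : {rmorphism C -> C})) trmx1. Qed.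

Lemma adjK m n (A : 'M[C]_(m, n)) : adj (adj A) = A.
Proof. by apply/matrixP=> i j; rewrite !mxE conjCK. Qed.

Lemma adj_castmx_mul m m' p q (e : m = m') (Y : 'M[C]_(m, p)) (Z : 'M[C]_(m, q)) :
  adj (castmx (e, erefl p) Y) *m castmx (e, erefl q) Z = adj Y *m Z.
Proof. by case: m' / e. Qed.

Lemma castmx_mulmx m m' p (e : m = m') (Q : 'M[C]_m) (Y : 'M[C]_(m, p)) :
  castmx (e, e) Q *m castmx (e, erefl p) Y = castmx (e, erefl p) (Q *m Y).
Proof. by case: m' / e. Qed.

End Adjoint.

Section Tensor.
Variable R : comPzRingType.

Lemma tensmx11 m p : (1%:M : 'M[R]_m) *t (1%:M : 'M[R]_p) = 1%:M.
Proof.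
apply/matrixP=> i j.
case: (mxtens_indexP i) => i0 i1; case: (mxtens_indexP j) => j0 j1.
rewrite tensmxE !mxE (inj_eq (can_inj (@mxtens_indexK _ _))) xpair_eqE.
by case: (i0 == j0); case: (i1 == j1); rewrite /= ?mulr1 ?mulr0 ?mul0r.
Qed.

Lemma tensmxA m n p q r s (A : 'M[R]_(m, n)) (B : 'M[R]_(p, q)) (D : 'M[R]_(r, s)) :
  castmx (mulnA m p r, mulnA n q s) (A *t (B *t D)) = (A *t B) *t D.
Proof.
apply/matrixP=> i j.
case: (mxtens_indexP i) => i' i2; case: (mxtens_indexP i') => i0 i1.
case: (mxtens_indexP j) => j' j2; case: (mxtens_indexP j') => j0 j1.
have reassoc a b c (x : 'I_a) (y : 'I_b) (z : 'I_c) :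
    cast_ord (esym (mulnA a b c)) (mxtens_index (mxtens_index (x, y), z))
    = mxtens_index (x, mxtens_index (y, z)).
  by apply: val_inj => /=; rewrite mulnDl -mulnA addnA.
by rewrite castmxE /= !reassoc !tensmxE mulrA.
Qed.

Lemma tens1mx_commute m p q (A : 'M[R]_m) (B : 'M[R]_(q, p)) :
  (1%:M *t B) *m (A *t 1%:M) = (A *t 1%:M) *m (1%:M *t B).
Proof. by rewrite !tensmx_mul !mul1mx !mulmx1. Qed.

End Tensor.

Section Compression.
Variable C : numClosedFieldType.

Lemma isometry1 m : Defs.isometry (1%:M : 'M[C]_m).
Proof. by rewrite /Defs.isometry adj1 mulmx1. Qed.

Lemma isometry_tens m n p q (A : 'M[C]_(m, n)) (B : 'M[C]_(p, q)) :
  Defs.isometry A -> Defs.isometry B -> Defs.isometry (A *t B).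
Proof. by rewrite /Defs.isometry adj_tens tensmx_mul => -> ->; rewrite tensmx11. Qed.

Lemma isometry_castmx m m' n (e : m = m') (V : 'M[C]_(m, n)) :
  Defs.isometry V -> Defs.isometry (castmx (e, erefl n) V).
Proof. by rewrite /Defs.isometry adj_castmx_mul. Qed.

Lemma compress_tens1mx m p q (A : 'M[C]_m) (B : 'M[C]_(q, p)) :
  adj (1%:M *t B) *m (A *t 1%:M) *m (1%:M *t B) = A *t (adj B *m B).
Proof. by rewrite adj_tens adj1 !tensmx_mul mul1mx !mulmx1. Qed.

Lemma compress_tensmx1 m n p (X : 'M[C]_(m, n)) (Y : 'M[C]_m) :
  adj (X *t 1%:M) *m (Y *t (1%:M : 'M_p)) *m (X *t 1%:M) = (adj X *m Y *m X) *t 1%:M.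
Proof. by rewrite adj_tens adj1 !tensmx_mul !mulmx1. Qed.

End Compression.

Section Transfer.
Variables (C : numClosedFieldType) (n p q r : nat).
Variables (zeta : 'M[C]_(p, n)) (chi : 'M[C]_(q, n)) (W : 'M[C]_(r, p)) (V : 'M[C]_(r, q)).
Hypothesis intertwine : W *m zeta = V *m chi.

Lemma compress_transfer (P : 'M[C]_p) (Q : 'M[C]_r) :
  adj W *m Q *m W = P ->
  adj zeta *m P *m zeta = adj chi *m (adj V *m Q *m V) *m chi.
Proof. by move=> <-; rewrite !mulmxA -adjM -!mulmxA intertwine adjM !mulmxA. Qed.

Hypothesis V_iso : Defs.isometry V.

Lemma chi_from_zeta : chi = adj V *m W *m zeta.
Proof. by rewrite -mulmxA intertwine mulmxA V_iso mul1mx. Qed.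

Lemma intertwiner_transfer (A : 'M[C]_n) (P : 'M[C]_p) (Q : 'M[C]_r) :
  W *m P = Q *m W -> P *m adj W = adj W *m Q ->
  A *m adj zeta = adj zeta *m P -> zeta *m A = P *m zeta ->
  A *m adj chi = adj chi *m (adj V *m Q *m V) /\
  chi *m A = (adj V *m Q *m V) *m chi.
Proof.
move=> WP PW Azeta zetaA.
have adj_chi : adj chi = adj zeta *m adj W *m V by rewrite chi_from_zeta !adjM adjK mulmxA.
split.
  have -> : adj chi *m (adj V *m Q *m V) = adj zeta *m adj W *m Q *m V.
    by rewrite !mulmxA -adjM -intertwine adjM.
  by rewrite adj_chi !mulmxA Azeta -(mulmxA _ P) PW !mulmxA.
by rewrite {1}chi_from_zeta -!mulmxA zetaA (mulmxA W) WP -mulmxA intertwine.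
Qed.

End Transfer.

Theorem mainTheorem9 (C : numClosedFieldType) (n az bz ac bc : nat)
  (zeta : 'M[C]_(az * bz, n)) (chi : 'M[C]_(ac * bc, n)) :
  splitting_map chi -> splitting_map zeta -> comprehends zeta chi ->
  (forall A : 'M[C]_n, loc zeta A -> loc chi A) /\
  (forall A : 'M[C]_n, stloc zeta A -> stloc chi A).
Proof.
move=> _ _ [k [bul [circ [bul_iso [circ_iso comp]]]]].
set e := mulnA az k bc.
set W := (1%:M : 'M[C]_az) *t bul.
set V := castmx (esym e, erefl (ac * bc)) (circ *t (1%:M : 'M[C]_bc)).
have WV : W *m zeta = V *m chi.
  by rewrite -(castmxK e (erefl n) (W *m zeta)) comp castmx_mul castmx_id.
have V_iso : Defs.isometry V by apply/isometry_castmx/isometry_tens/isometry1.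
pose lift (At : 'M[C]_az) := adj circ *m (At *t (1%:M : 'M[C]_k)) *m circ.
have compressV At : adj V *m (At *t 1%:M) *m V = lift At *t 1%:M.
  have -> : At *t 1%:M = castmx (esym e, esym e) ((At *t 1%:M) *t (1%:M : 'M_bc)).
    by rewrite -tensmxA castmxK tensmx11.
  by rewrite -mulmxA castmx_mulmx adj_castmx_mul mulmxA compress_tensmx1.
have compressW At : adj W *m (At *t 1%:M) *m W = At *t 1%:M.
  by rewrite compress_tens1mx bul_iso.
split=> A [At HA]; exists (lift At); rewrite -compressV.
  by rewrite HA; exact: (compress_transfer WV (compressW At)).
have [WP PW] : W *m (At *t 1%:M) = (At *t 1%:M) *m W /\
               (At *t 1%:M) *m adj W = adj W *m (At *t 1%:M).
  by rewrite /W adj_tens adj1 !tens1mx_commute.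
case: HA => Azeta zetaA.
exact: (intertwiner_transfer WV V_iso WP PW Azeta zetaA).
Qed.
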